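(* Let $0<r\le 1/2$, let $H$ be an $r$-skew LKS-graph on $n$ vertices with parameters $(k,\eta,\varepsilon,d)$ (with $k,\eta,d$ arbitrary), and let $\mathbf H$ be its cluster graph. Then: (1) If $C$ is an $L$-cluster and $D$ is an $S$-cluster of $\mathbf H$, then $|C|\le n/|V(\mathbf H)|$ and $|D|\le \frac{n}{r|V(\mathbf H)|}$. (2) If $v\in V(H)$ is an ultratypical vertex, $C$ is the cluster of $\mathbf H$ containing $v$, and $\mathcal S\subseteq V(\mathbf H)$ is any set of clusters, then $\deg(v,\bigcup\mathcal S)\ge \overline{\deg}(C,\mathcal S)-2\sqrt{\varepsilon}\,n/r$.
   Context: For disjoint vertex sets $X,Y$, $d(X,Y)=|E(X,Y)|/(|X||Y|)$ is the density, and $(X,Y)$ is $\varepsilon$-regular if $|d(X',Y')-d(X,Y)|\le\varepsilon$ for all $X'\subseteq X$, $Y'\subseteq Y$ with $|X'|\ge\varepsilon|X|$, $|Y'|\ge\varepsilon|Y|$. For $r\le 1/2$, a graph $H$ is an $r$-skew LKS-graph with parameters $(k,\eta,\varepsilon,d)$ if there is a partition $\{L_1,\dots,L_{m_L},S_1,\dots,S_{m_S}\}$ of $V(H)$ such that: (i) $m_L\ge(1+\eta)m_S$; (ii) all $L_i$ have the same size and all $S_j$ have the same size; (iii) $r|S_j|=(1-r)|L_i|$ for all $i,j$; (iv) each pair $(L_i,L_j)$ ($i\ne j$) and each pair $(L_i,S_j)$ is $\varepsilon$-regular of density either $0$ or at least $d$; (v) there are no edges inside any of the sets and no edges between $S_i$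 and $S_j$ for $i\ne j$; (vi) the average degree of the vertices of each $L_i$ is at least $(1+\eta)k$. The sets $L_i$ are $L$-clusters, the sets $S_j$ are $S$-clusters. The cluster graph $\mathbf H$ has vertex set $\{L_1,\dots,L_{m_L},S_1,\dots,S_{m_S}\}$ (the clusters), with an edge between two clusters whenever the corresponding pair has positive density in $H$. For $v\in V(H)$ and $Z\subseteq V(H)$, $\deg(v,Z)$ is the number of neighbours of $v$ in $Z$. For a set $\mathcal S$ of clusters, $\bigcup\mathcal S$ is the union of its clusters, and for a cluster $A$, $\overline{\deg}(A,\mathcal S)$ is the average of $\deg(a,\bigcup\mathcal S)$ over $a\in A$. A vertex $x$ of a cluster $X$ is typical with respect to a cluster $Y$ if $\deg(x,Y)\ge (d(X,Y)-\varepsilon)|Y|$; $x$ is ultratypical if it is typical with respect to all but at most $\sqrt{\varepsilon}\,|V(\mathbf H)|$ clusters $Y\ne X$. *)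

From HB Require Import structures.
From mathcomp Require Import all_boot all_order all_algebra.
Set Implicit Arguments. Unset Strict Implicit. Unset Printing Implicit Defensive.
Import Order.TTheory GRing.Theory Num.Theory.
Local Open Scope ring_scope.

Section LKS.
Variable R : rcfType.
Variable V : finType.
Variable e : rel V.

Definition deg (v : V) (Z : {set V}) : nat := #|[set y in Z | e v y]|.

Definition nedges (X Y : {set V}) : nat :=
  #|[set p : V * V | [&& p.1 \in X, p.2 \in Y & e p.1 p.2]]|.

Definition density (X Y : {set V}) : R :=
  (nedges X Y)%:R / ((#|X| * #|Y|)%N)%:R.

Definition eps_regular (eps : R) (X Y : {set V}) : Prop :=
  forall X' Y' : {set V}, X' \subset X -> Y' \subset Y ->
    eps * #|X|%:R <= #|X'|%:R -> eps * #|Y|%:R <= #|Y'|%:R ->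
    `|density X' Y' - density X Y| <= eps.

Definition avgdeg (A Z : {set V}) : R :=
  (\sum_(a in A) deg a Z)%:R / #|A|%:R.

Variables (mL mS : nat) (L : 'I_mL -> {set V}) (S : 'I_mS -> {set V}).

(* clusters of the cluster graph, indexed by 'I_mL + 'I_mS *)
Definition cluster (c : 'I_mL + 'I_mS) : {set V} :=
  match c with inl i => L i | inr j => S j end.

Definition nclusters : nat := (mL + mS)%N.

Definition cunion (Ss : {set 'I_mL + 'I_mS}) : {set V} :=
  \bigcup_(c in Ss) cluster c.

Definition reg_pair (eps d : R) (X Y : {set V}) : Prop :=
  eps_regular eps X Y /\ (density X Y = 0 \/ d <= density X Y).

Definition is_rskew_LKS (r k eta eps d : R) : Prop :=
  [/\
      symmetric e /\ irreflexive e,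
      [/\ (forall c, cluster c != set0),
          (forall c c', c != c' -> [disjoint cluster c & cluster c'])
        & (forall v : V, exists c, v \in cluster c)],
      (1 + eta) * mS%:R <= mL%:R,
      (forall i j, #|L i| = #|L j|) /\ (forall i j, #|S i| = #|S j|)
    & [/\
      (forall i j, r * #|S j|%:R = (1 - r) * #|L i|%:R),
      (forall i j, i != j -> reg_pair eps d (L i) (L j))
                 /\ (forall i j, reg_pair eps d (L i) (S j)),
      (forall c x y, x \in cluster c -> y \in cluster c -> ~~ e x y)
                /\ (forall i j x y, i != j -> x \in S i -> y \in S j -> ~~ e x y)
    & (forall i, (1 + eta) * k <= avgdeg (L i) setT)]].

Definition typical (eps : R) (x : V) (X Y : {set V}) : bool :=
  (density X Y - eps) * #|Y|%:R <= (deg x Y)%:R.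

Definition ultratypical (eps : R) (x : V) (c : 'I_mL + 'I_mS) : Prop :=
  (#|[set c' | (c' != c) &&
      ~~ typical eps x (cluster c) (cluster c') ]|)%:R
    <= Num.sqrt eps * nclusters%:R.

End LKS.
Arguments avgdeg {R V} e A Z.
Arguments density {R V} e X Y.
Arguments is_rskew_LKS {R V} e {mL mS} L S r k eta eps d.
Arguments ultratypical {R V} e {mL mS} L S eps x c.

From HB Require Import structures.
From mathcomp Require Import all_boot all_order all_algebra.
From mathcomp Require Import ring lra.
Import Order.TTheory GRing.Theory Num.Theory.
Set Implicit Arguments.
Unset Strict Implicit.
Unset Printing Implicit Defensive.
Local Open Scope ring_scope.

(* Part (1): as r <= 1/2, condition (iii) makes every S-cluster at least as
   large as every L-cluster, and r|S_j| = (1 - r)|L_i| <= |L_i|; so every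
   cluster has at least |L_i| (resp. r|S_j|) vertices, and the |V(H)| clusters
   are disjoint subsets of V(H).
   Part (2): both sides split as sums over the clusters Y in the family.  The
   gap avgdeg(C, Y) - deg(v, Y) vanishes for Y = C (clusters are independent),
   is at most min(eps, 1)|Y| <= sqrt(eps)|Y| when v is typical w.r.t. Y, and
   at most |Y| <= n / (r|V(H)|) otherwise.  At most sqrt(eps)|V(H)| clusters are
   atypical, so the total gap is at most sqrt(eps) n + sqrt(eps) n / r. *)

Lemma le1_of_le_half {R : realFieldType} (r : R) : r <= 2^-1 -> r <= 1.
Proof. by move/le_trans; apply; rewrite invf_le1 ?ler1n ?ltr0n. Qed.

Lemma min1_le_sqrtr {R : rcfType} (x : R) : Num.min x 1 <= Num.sqrt x.
Proof.
have [x_le1|x_gt1] := lerP x 1; last first.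
  have x_ge0 : 0 <= x := le_trans ler01 (ltW x_gt1).
  by rewrite -sqrtr1 ler_sqrt // ltW.
have [x_lt0|x_ge0] := ltrP x 0; first by apply: le_trans (sqrtr_ge0 x); apply: ltW.
have sx_le1 : Num.sqrt x <= 1 by rewrite -sqrtr1 ler_sqrt.
by rewrite -{1}(sqr_sqrtr x_ge0) expr2 ler_piMl ?sqrtr_ge0.
Qed.

Section Degrees.
Variables (R : rcfType) (V : finType) (e : rel V).

Lemma degE v Z : deg e v Z = (\sum_(y in Z) e v y)%N.
Proof.
rewrite /deg -sum1_card big_mkcond [RHS]big_mkcond /=.
by apply: eq_bigr => y _; rewrite inE; case: (y \in Z); case: (e v y).
Qed.

Lemma nedgesE X Y : nedges e X Y = (\sum_(a in X) deg e a Y)%N.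
Proof.
rewrite /nedges -sum1_card big_mkcond /=.
rewrite (eq_bigr (fun p => (p.1 \in X) * ((p.2 \in Y) && e p.1 p.2))%N); last first.
  by move=> p _; rewrite inE; case: (p.1 \in X); case: (p.2 \in Y); case: (e p.1 p.2).
rewrite -(pair_big predT predT (fun a y => (a \in X) * ((y \in Y) && e a y))%N) /=.
rewrite [RHS]big_mkcond; apply: eq_bigr => a _.
case: (a \in X); last by rewrite big1.
by rewrite degE [RHS]big_mkcond; apply: eq_bigr => y _; rewrite mul1n; case: (y \in Y).
Qed.

Lemma avgdeg_le_card A Y : avgdeg (R:=R) e A Y <= #|Y|%:R.
Proof.
rewrite /avgdeg; have [->|A_gt0] := posnP #|A|; first by rewrite invr0 mulr0.
rewrite ler_pdivrMr ?ltr0n // -natrM ler_nat mulnC -sum1_card big_distrl /=.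
apply: leq_sum => a _; rewrite mul1n subset_leq_card //.
by apply/subsetP => y; rewrite inE => /andP[].
Qed.

(* No nonemptiness assumptions are needed: with x / 0 = 0 both sides vanish
   when A or Y is empty. *)
Lemma density_mulr_card A Y : density e A Y * #|Y|%:R = avgdeg (R:=R) e A Y.
Proof.
have [Y0|Y_gt0] := posnP #|Y|.
  have avg_le0 := avgdeg_le_card A Y; rewrite Y0 in avg_le0 *.
  by apply/esym/eqP; rewrite mulr0 eq_le avg_le0 divr_ge0.
by rewrite /density /avgdeg nedgesE natrM invfM mulrA mulfVK ?pnatr_eq0 -?lt0n.
Qed.

Lemma avgdeg_sub_deg_le_typical eps x X Y :
  typical e eps x X Y ->
  avgdeg (R:=R) e X Y - (deg e x Y)%:R <= Num.sqrt eps * #|Y|%:R.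
Proof.
move=> typ; have deg_ge0 := ler0n R (deg e x Y).
have gap_le_card := avgdeg_le_card X Y.
move: typ; rewrite /typical mulrBl density_mulr_card => gap_le_eps.
apply: le_trans (ler_wpM2r (ler0n R #|Y|) (min1_le_sqrtr eps)).
by rewrite minr_pMl // le_min mul1r; apply/andP; split; lra.
Qed.

Lemma avgdeg_self_eq0 (C : {set V}) :
  {in C &, forall x y, ~~ e x y} -> avgdeg (R:=R) e C C = 0.
Proof.
move=> indepC; rewrite /avgdeg big1 ?mul0r // => a aC.
by rewrite degE big1 // => y yC; rewrite (negbTE (indepC a y aC yC)).
Qed.

End Degrees.

Lemma nclustersE mL mS : nclusters mL mS = #|{: 'I_mL + 'I_mS}|.
Proof. by rewrite card_sum !card_ord. Qed.

Lemma nclusters_gt0 mL mS (c : 'I_mL + 'I_mS) : (0 < nclusters mL mS)%N.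
Proof. by rewrite nclustersE; apply/card_gt0P; exists c. Qed.

Section ClusterUnions.
Variables (R : rcfType) (V : finType) (e : rel V).
Variables (mL mS : nat) (L : 'I_mL -> {set V}) (S : 'I_mS -> {set V}).
Hypothesis disjoint_clusters :
  forall c c', c != c' -> [disjoint cluster L S c & cluster L S c'].

Lemma big_cunion (f : V -> nat) Ss :
  (\sum_(x in cunion L S Ss) f x = \sum_(c in Ss) \sum_(x in cluster L S c) f x)%N.
Proof.
pose F c := if c \in Ss then cluster L S c else set0.
have F_sub c : F c \subset cluster L S c by rewrite /F; case: ifP; rewrite ?sub0set.
have -> : cunion L S Ss = \bigcup_c F c by rewrite /cunion big_mkcond.
rewrite partition_disjoint_bigcup => [|c c' /disjoint_clusters]; last exact: disjointW.
by rewrite [RHS]big_mkcond; apply: eq_bigr => c _; rewrite /F; case: ifP; rewrite ?big_set0.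
Qed.

Lemma card_cunion Ss : #|cunion L S Ss| = (\sum_(c in Ss) #|cluster L S c|)%N.
Proof.
rewrite -sum1_card (big_cunion (fun=> 1%N)).
by under eq_bigr do rewrite sum1_card.
Qed.

Lemma sum_card_clusters_le (Ss : {set 'I_mL + 'I_mS}) :
  (\sum_(c in Ss) #|cluster L S c| <= #|V|)%N.
Proof. by rewrite -card_cunion max_card. Qed.

Lemma deg_cunion v Ss :
  deg e v (cunion L S Ss) = (\sum_(c in Ss) deg e v (cluster L S c))%N.
Proof. by rewrite degE big_cunion; apply: eq_bigr => c _; rewrite degE. Qed.

Lemma avgdeg_cunion A Ss :
  avgdeg (R:=R) e A (cunion L S Ss) = \sum_(c in Ss) avgdeg e A (cluster L S c).
Proof.
rewrite /avgdeg -mulr_suml -natr_sum.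
by under eq_bigr do rewrite deg_cunion; rewrite exchange_big.
Qed.

End ClusterUnions.

Section ClusterSizes.
Variables (R : realFieldType) (V : finType).
Variables (mL mS : nat) (L : 'I_mL -> {set V}) (S : 'I_mS -> {set V}) (r : R).
Hypothesis disjoint_clusters :
  forall c c', c != c' -> [disjoint cluster L S c & cluster L S c'].
Hypotheses (r_gt0 : 0 < r) (r_le_half : r <= 2^-1).
Hypothesis card_L_eq : forall i i', #|L i| = #|L i'|.
Hypothesis card_S_eq : forall j j', #|S j| = #|S j'|.
Hypothesis skew_card : forall i j, r * #|S j|%:R = (1 - r) * #|L i|%:R.

Let r_le1 : r <= 1 := le1_of_le_half r_le_half.

Lemma card_L_le_card_S i j : #|L i|%:R <= #|S j|%:R :> R.
Proof.
rewrite -(ler_pM2l r_gt0) (skew_card i); have := ler0n R #|L i|.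
have : 2 * r <= 1 by rewrite -ler_pdivlMl ?ltr0n // mulr1.
nra.
Qed.

Lemma card_L_le_card_cluster i c : #|L i|%:R <= #|cluster L S c|%:R :> R.
Proof. by case: c => [i'|j] /=; rewrite ?(card_L_eq i i') ?card_L_le_card_S. Qed.

Lemma skew_card_cluster_le c c' : r * #|cluster L S c|%:R <= #|cluster L S c'|%:R.
Proof.
case: c => [i|j] /=.
  by apply: le_trans (card_L_le_card_cluster i c'); rewrite ler_piMl.
case: c' => [i|j'] /=; last by rewrite (card_S_eq j j') ler_piMl.
by rewrite (skew_card i j) ler_piMl // lerBlDr lerDl ltW.
Qed.

Lemma nclusters_mulr_le (t : R) :
  (forall c, t <= #|cluster L S c|%:R) -> (nclusters mL mS)%:R * t <= #|V|%:R.
Proof.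
move=> t_le; apply: le_trans (_ : \sum_c (#|cluster L S c|%:R : R) <= _).
  by rewrite nclustersE mulr_natl -sumr_const; apply: ler_sum => c _.
rewrite -natr_sum ler_nat; have := sum_card_clusters_le disjoint_clusters setT.
by rewrite (eq_bigl predT) // => c; rewrite inE.
Qed.

Lemma card_L_le i : #|L i|%:R <= #|V|%:R / (nclusters mL mS)%:R :> R.
Proof.
rewrite ler_pdivlMr ?ltr0n ?(nclusters_gt0 (inl i)) // mulrC.
exact/nclusters_mulr_le/card_L_le_card_cluster.
Qed.

Lemma card_cluster_le c :
  #|cluster L S c|%:R <= #|V|%:R / (r * (nclusters mL mS)%:R).
Proof.
rewrite ler_pdivlMr ?mulr_gt0 ?ltr0n ?(nclusters_gt0 c) // mulrC mulrAC mulrC.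
exact/nclusters_mulr_le/skew_card_cluster_le.
Qed.

End ClusterSizes.

Section UltratypicalDegree.
Variables (R : rcfType) (V : finType) (e : rel V).
Variables (mL mS : nat) (L : 'I_mL -> {set V}) (S : 'I_mS -> {set V}) (eps K : R).
Hypothesis disjoint_clusters :
  forall c c', c != c' -> [disjoint cluster L S c & cluster L S c'].
Hypothesis independent_clusters :
  forall c, {in cluster L S c &, forall x y, ~~ e x y}.
Hypothesis card_cluster_le : forall c, #|cluster L S c|%:R <= K.

Definition atypical_clusters v c :=
  [set c' | (c' != c) && ~~ typical e eps v (cluster L S c) (cluster L S c')].

Lemma avgdeg_sub_deg_cluster_le v c c' :
  avgdeg e (cluster L S c) (cluster L S c') - (deg e v (cluster L S c'))%:R
    <= Num.sqrt eps * #|cluster L S c'|%:R + (c' \in atypical_clusters v c)%:R * K.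
Proof.
have deg_ge0 := ler0n R (deg e v (cluster L S c')).
have sqrt_card_ge0 := mulr_ge0 (sqrtr_ge0 eps) (ler0n R #|cluster L S c'|).
have K_ge0 : 0 <= K := le_trans (ler0n R _) (card_cluster_le c').
have [eq_c'c|neq_c'c] := eqVneq c' c.
  subst c'; rewrite avgdeg_self_eq0 //.
  have := mulr_ge0 (ler0n R (c \in atypical_clusters v c)) K_ge0; lra.
rewrite inE neq_c'c /=; case: (boolP (typical _ _ _ _ _)) => /= [typ|_].
  by rewrite mul0r addr0 avgdeg_sub_deg_le_typical.
have := avgdeg_le_card R e (cluster L S c) (cluster L S c').
have := card_cluster_le c'; lra.
Qed.

Lemma ultratypical_deg_cunion_ge v c Ss :
  ultratypical e L S eps v c ->
  avgdeg e (cluster L S c) (cunion L S Ss)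
    - Num.sqrt eps * (#|V|%:R + (nclusters mL mS)%:R * K)
    <= (deg e v (cunion L S Ss))%:R.
Proof.
move=> ultra_v; have K_ge0 : 0 <= K := le_trans (ler0n R _) (card_cluster_le c).
rewrite avgdeg_cunion // deg_cunion // natr_sum lerBlDr addrC -lerBlDr -sumrB.
apply: le_trans (ler_sum _ (fun c' _ => avgdeg_sub_deg_cluster_le v c c')) _.
rewrite big_split /= -mulr_sumr -mulr_suml mulrDr mulrA lerD //.
  by rewrite ler_wpM2l ?sqrtr_ge0 // -natr_sum ler_nat sum_card_clusters_le.
rewrite ler_wpM2r // (le_trans _ ultra_v) // -natr_sum ler_nat.
rewrite big_mkcond -sum1_card [leqRHS]big_mkcond leq_sum // => c' _.
by case: (c' \in Ss); case: (c' \in atypical_clusters v c).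
Qed.

End UltratypicalDegree.

Theorem proposition3p2 (R : rcfType) (V : finType) (e : rel V)
    (mL mS : nat) (L : 'I_mL -> {set V}) (S : 'I_mS -> {set V})
    (r k eta eps d : R) :
  0 < r -> r <= 2^-1 ->
  is_rskew_LKS e L S r k eta eps d ->
  (* (1) *)
  ((forall i, (#|L i|%:R : R) <= #|V|%:R / (nclusters mL mS)%:R) /\
   (forall j, (#|S j|%:R : R) <= #|V|%:R / (r * (nclusters mL mS)%:R))) /\
  (* (2) *)
  (forall (v : V) (c : 'I_mL + 'I_mS) (Ss : {set 'I_mL + 'I_mS}),
     v \in cluster L S c ->
     ultratypical e L S eps v c ->
     avgdeg e (cluster L S c) (cunion L S Ss)
       - 2 * Num.sqrt eps * #|V|%:R / r
       <= (deg e v (cunion L S Ss))%:R).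
Proof.
move=> r_gt0 r_le_half.
move=> [_ [_ disj _] _ [card_L_eq card_S_eq] [skew_card _ [indep _] _]].
have card_cluster_bound :=
  card_cluster_le disj r_gt0 r_le_half card_L_eq card_S_eq skew_card.
split.
  split=> [i|j]; last exact: (card_cluster_bound (inr j)).
  exact: card_L_le disj r_gt0 r_le_half card_L_eq skew_card i.
(* The bound holds for every vertex v, not only for those lying in c. *)
move=> v c Ss _ ultra_v.
apply: le_trans (ultratypical_deg_cunion_ge disj indep card_cluster_bound Ss ultra_v).
have N_gt0 : 0 < (nclusters mL mS)%:R :> R by rewrite ltr0n (nclusters_gt0 c).
have n_le : #|V|%:R <= #|V|%:R / r :> R.
  by rewrite ler_pdivlMr // ler_piMr // le1_of_le_half.
have -> : (nclusters mL mS)%:R * (#|V|%:R / (r * (nclusters mL mS)%:R)) = #|V|%:R / r.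
  by field; rewrite !gt_eqF.
have := ler_wpM2l (sqrtr_ge0 eps) n_le; lra.
Qed.
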